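(* Let $\mathcal{C}_{\mathbf{P}\boldsymbol{G}_N}(\mathcal{A})$ be an upper polynomial polar code and let $f$ be the monomial with $\operatorname{ev}(f)=\boldsymbol{G}_N[i]$ for some $i\in[0,2^m-1]$. Then for all $j>i$, $\operatorname{ev}(\check{f})\cdot (\mathbf{P}\boldsymbol{G}_N)[j]=0$.
   Context: Let $m\ge1$, $N=2^m$, $\mathbf{R}_m=\mathbb{F}_2[x_0,\dots,x_{m-1}]/(x_0^2-x_0,\dots,x_{m-1}^2-x_{m-1})$, and $\operatorname{ev}(Q)$ the evaluation vector of $Q\in\mathbf{R}_m$ at all points of $\mathbb{F}_2^m$. Let $\boldsymbol{G}_N=\begin{pmatrix}1&0\\1&1\end{pmatrix}^{\otimes m}$; row $i$ of $\boldsymbol{G}_N$, denoted $\boldsymbol{G}_N[i]$, is $\operatorname{ev}$ of the monomial $x_0^{b_0}\cdots x_{m-1}^{b_{m-1}}$ with $(b_0,\dots,b_{m-1})$ the binary expansion of $2^m-1-i$. An upper polynomial polar code $\mathcal{C}_{\mathbf{P}\boldsymbol{G}_N}(\mathcal{A})$ is the code spanned by the rows of $\mathbf{P}\boldsymbol{G}_N$ indexed by $\mathcal{A}\subseteq[0,N-1]$, where $\mathbf{P}\in\mathbb{F}_2^{N\times N}$ is upper triangular with ones on the diagonal. For a monomial $f$, $\check{f}=x_0\cdots x_{m-1}/f$ is its multiplicative complement. The dot denotes the scalar product over $\mathbb{F}_2$. *)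

From HB Require Import structures.
From mathcomp Require Import all_boot all_order all_algebra.
From mathcomp Require Import mxtens.
Set Implicit Arguments. Unset Strict Implicit. Unset Printing Implicit Defensive.
Import GRing.Theory.
Local Open Scope ring_scope.

Definition G2 : 'M['F_2]_2 := \matrix_(i < 2, j < 2) ((j <= i)%N)%:R.

Definition GN (m : nat) : 'M['F_2]_(2 ^ m) := ntensmx G2 m.

Definition bit (n l : nat) : bool := odd (n %/ 2 ^ l).

(* A monomial of R_m = F_2[x_0..x_{m-1}]/(x_l^2 - x_l) is x^S = prod_{l in S} x_l,
   represented by its support S : {set 'I_m}. *)
Definition monomial (m : nat) := {set 'I_m}.

(* The evaluation points of F_2^m are indexed by p in [0, 2^m - 1]: the point
   with index p is the binary expansion of 2^m - 1 - p, i.e. coordinate l is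
   1 - bit l p.  This is the ordering for which G_N[i] = ev(monomial with
   exponent vector the binary expansion of 2^m - 1 - i). *)
Definition point (m : nat) (p : 'I_(2 ^ m)) (l : 'I_m) : 'F_2 := (~~ bit p l)%:R.

Definition ev (m : nat) (f : monomial m) : 'rV['F_2]_(2 ^ m) :=
  \row_(p < 2 ^ m) \prod_(l in f) point p l.

(* Multiplicative complement  x_0...x_{m-1} / f. *)
Definition mcompl (m : nat) (f : monomial m) : monomial m := ~: f.

Definition dotF2 (n : nat) (u v : 'rV['F_2]_n) : 'F_2 := \sum_(k < n) u 0 k * v 0 k.

Definition upper_unitri (n : nat) (P : 'M['F_2]_n) : Prop :=
  (forall i j : 'I_n, (j < i)%N -> P i j = 0) /\ (forall i : 'I_n, P i i = 1).

Definition polar_code (m : nat) (P : 'M['F_2]_(2 ^ m)) (A : {set 'I_(2 ^ m)}) :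
  {vspace 'rV['F_2]_(2 ^ m)} := <<[seq row i (P *m GN m) | i in A]>>%VS.

From HB Require Import structures.
From mathcomp Require Import all_boot all_order all_algebra.
From mathcomp Require Import mxtens.
Set Implicit Arguments. Unset Strict Implicit. Unset Printing Implicit Defensive.
Import GRing.Theory.
Local Open Scope ring_scope.

(* Identify an index p in [0, 2^m - 1] with the set [bitset p] of its binary
   digits.  Then ev(x^S)[p] = [bitset p ⊆ ~S] and G_N[k][p] = [bitset p ⊆ bitset k],
   so ev(g) · G_N[k] counts the subsets of bitset k \ g, i.e. it is 2^|bitset k \ g|
   in F_2.  The hypothesis ev f = G_N[i] forces f = ~bitset i, so the complement of f
   is bitset i.  Since P is upper triangular, (P G_N)[j] only involves rows G_N[k]
   with k >= j > i, and such a k has a digit outside bitset i: every term is even. *)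

Lemma bitS n l : bit n l.+1 = bit n./2 l.
Proof. by rewrite /bit expnS divnMA divn2. Qed.

Lemma bit0 n : bit n 0 = odd n.
Proof. by rewrite /bit expn0 divn1. Qed.

Lemma bit_modexp n k l : (l < k)%N -> bit (n %% 2 ^ k) l = bit n l.
Proof.
move=> lk; rewrite /bit {2}(divn_eq n (2 ^ k)).
have -> : (n %/ 2 ^ k * 2 ^ k = n %/ 2 ^ k * 2 ^ (k - l) * 2 ^ l)%N.
  by rewrite -mulnA -expnD subnK // ltnW.
rewrite divnMDl ?expn_gt0 // oddD oddM oddX /=.
by rewrite subn_eq0 leqNgt lk andbF.
Qed.

Lemma divexp_bit n k : (n < 2 ^ k.+1)%N -> (n %/ 2 ^ k)%N = bit n k.
Proof.
move=> lt_n; rewrite /bit.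
have : (n %/ 2 ^ k < 2)%N by rewrite ltn_divLR ?expn_gt0 // -expnS.
by case: (n %/ 2 ^ k)%N => [|[|]].
Qed.

Lemma bits_sub_leq m k i : (k < 2 ^ m)%N ->
  (forall l, (l < m)%N -> bit k l -> bit i l) -> (k <= i)%N.
Proof.
elim: m k i => [|m IH] k i lt_k sub_ki; first by move: lt_k; rewrite expn0 ltnS leqn0 => /eqP->.
rewrite -(odd_double_half k) -(odd_double_half i) leq_add //.
  by have := sub_ki 0%N isT; rewrite !bit0; case: (odd k) => // ->.
rewrite leq_double; apply: IH => [|l lt_lm].
  by rewrite -divn2 ltn_divLR // -expnSr.
by rewrite -!bitS; apply: sub_ki.
Qed.

Definition bitset m (p : 'I_(2 ^ m)) : {set 'I_m} := [set l : 'I_m | bit p l].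

Lemma bitset_subset_leq m (k i : 'I_(2 ^ m)) :
  bitset k \subset bitset i -> (k <= i)%N.
Proof.
move/subsetP=> sub_ki; apply: bits_sub_leq (ltn_ord k) _ => l lt_lm.
by have := sub_ki (Ordinal lt_lm); rewrite !inE.
Qed.

Lemma bitset_inj m : injective (@bitset m).
Proof.
move=> p q eq_pq; apply/val_inj/eqP.
by rewrite eqn_leq !bitset_subset_leq // eq_pq.
Qed.

Lemma bitset_bij m : bijective (@bitset m).
Proof.
apply: inj_card_bij (@bitset_inj m) _.
by rewrite -cardsT -powersetT card_powerset cardsT !card_ord.
Qed.

Lemma prod_nat_F2 (T : finType) (A : {pred T}) (b : T -> bool) :
  \prod_(l in A) ((b l)%:R : 'F_2) = [forall (l | l \in A), b l]%:R.
Proof.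
have [all_b | /forall_inPn [l Al nbl]] := boolP [forall (l | l \in A), b l].
  by rewrite big1 // => l /(forall_inP all_b) ->.
by rewrite (bigD1 l) //= (negbTE nbl) mul0r.
Qed.

Lemma evE m (g : monomial m) p : ev g 0 p = (bitset p \subset ~: g)%:R.
Proof.
rewrite mxE /point prod_nat_F2; congr (nat_of_bool _ )%:R.
apply/forall_inP/subsetP => [gNp l | pNg l lg].
  by rewrite !inE; apply: contraTN => /gNp.
by apply: contraL lg => pl; rewrite -in_setC pNg ?inE.
Qed.

Lemma GN_bitsE m (k p : 'I_(2 ^ m)) :
  GN m k p = (all (fun l => bit p l ==> bit k l) (iota 0 m))%:R.
Proof.
elim: m k p => [|[|m] IH] k p.
- by rewrite /GN /= mxE; case: k => [[|]] //; case: p => [[|]].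
- by rewrite /GN /= mxE !bit0; case: k => [[|[|]]] //; case: p => [[|[|]]].
rewrite /GN ntensmxSS !mxE -/(GN m.+1 _ _) IH -natrM mulnb andbC.
rewrite (_ : iota 0 m.+2 = iota 0 m.+1 ++ [:: m.+1]) ?all_cat ?all_seq1; last first.
  by rewrite -addn1 iotaD.
congr (_ && _)%:R.
  apply: eq_in_all => l; rewrite mem_iota => /andP[_ lt_lm].
  by rewrite !bit_modexp.
case: k p => [k lt_k] [p lt_p] /=.
by rewrite !divexp_bit //; case: bit; case: bit.
Qed.

Lemma GNE m (k p : 'I_(2 ^ m)) : GN m k p = (bitset p \subset bitset k)%:R.
Proof.
rewrite GN_bitsE; congr (nat_of_bool _)%:R.
apply/allP/subsetP => [sub_pk l | sub_pk l].
  by rewrite !inE; apply/implyP/sub_pk; rewrite mem_iota ltn_ord.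
rewrite mem_iota => /andP[_ lt_lm]; apply/implyP.
by have := sub_pk (Ordinal lt_lm); rewrite !inE.
Qed.

Lemma monomial_of_GN_row m (f : monomial m) (i : 'I_(2 ^ m)) :
  ev f = row i (GN m) -> f = ~: bitset i.
Proof.
move=> ev_f; have [g _ gK] := bitset_bij m.
apply/setP => l; have := congr1 (fun v : 'rV_(2 ^ m) => v 0 (g [set l])) ev_f.
rewrite /= evE mxE GNE gK !sub1set !inE.
by case: (l \in f); case: (bit i l) => // /eqP; rewrite ?oner_eq0 // eq_sym oner_eq0.
Qed.

Lemma sum_subset_bitset m (B : {set 'I_m}) :
  \sum_(p < 2 ^ m) ((bitset p \subset B)%:R : 'F_2) = (2 ^ #|B|)%:R.
Proof.
have [g bitsetK gK] := bitset_bij m.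
rewrite (reindex g) /=; last by apply: onW_bij; exists (@bitset m).
under eq_bigr do rewrite gK.
by rewrite -natr_sum -big_mkcond sum1dep_card card_powerset.
Qed.

Lemma dotF2_ev_GN m (g : monomial m) (k : 'I_(2 ^ m)) :
  dotF2 (ev g) (row k (GN m)) = (2 ^ #|bitset k :\: g|)%:R.
Proof.
rewrite -sum_subset_bitset; apply: eq_bigr => p _.
by rewrite evE mxE GNE -natrM mulnb -subsetI setIC -setDE.
Qed.

Lemma dotF2_mulmx_row n (u : 'rV['F_2]_n) (P M : 'M['F_2]_n) (j : 'I_n) :
  dotF2 u (row j (P *m M)) = \sum_k P j k * dotF2 u (row k M).
Proof.
rewrite /dotF2; under eq_bigr do rewrite !mxE big_distrr.
rewrite exchange_big; apply: eq_bigr => k _; rewrite big_distrr.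
by apply: eq_bigr => p _; rewrite mxE; apply: mulrCA.
Qed.

Lemma natr_exp2_F2 n : (0 < n)%N -> (2 ^ n)%:R = 0 :> 'F_2.
Proof.
by case: n => // n _; rewrite expnS natrM (_ : 2%:R = 0 :> 'F_2) ?mul0r //; apply/val_inj.
Qed.

Theorem lemma4 (m : nat) (hm : (0 < m)%N)
  (P : 'M['F_2]_(2 ^ m)) (A : {set 'I_(2 ^ m)}) (hP : upper_unitri P)
  (i : 'I_(2 ^ m)) (f : monomial m) (hf : ev f = row i (GN m)) :
  forall j : 'I_(2 ^ m), (i < j)%N ->
    dotF2 (ev (mcompl f)) (row j (P *m GN m)) = 0.
Proof.
move=> j lt_ij; rewrite dotF2_mulmx_row big1 // => k _.
have [lt_kj | le_jk] := ltnP k j; first by rewrite hP.1 // mul0r.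
rewrite /mcompl (monomial_of_GN_row hf) setCK dotF2_ev_GN natr_exp2_F2 ?mulr0 //.
rewrite card_gt0; apply: contraTneq lt_ij => /eqP; rewrite setD_eq0.
by move/bitset_subset_leq => le_ki; rewrite -leqNgt (leq_trans le_jk).
Qed.
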